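(* Let $\Phi=(A;A^*;\{E_i\}_{i=0}^d;\{E^*_i\}_{i=0}^d)$ be a Leonard system in $\mathcal A$ with eigenvalue sequence $\theta_0,\dots,\theta_d$, and let $c_i$, $\nu$ be as defined below. Then $$(\theta_0-\theta_1)(\theta_0-\theta_2)\cdots(\theta_0-\theta_d)=\nu\,c_1c_2\cdots c_d .$$
   Context: Let $\mathbb K$ be a field, $d\ge 0$ an integer, and $\mathcal A$ a $\mathbb K$-algebra isomorphic to the full matrix algebra $\mathrm{Mat}_{d+1}(\mathbb K)$; $I$ is its identity. An element of $\mathcal A$ is multiplicity-free if it has $d+1$ mutually distinct eigenvalues in $\mathbb K$. If $A$ is multiplicity-free with eigenvalues $\theta_0,\dots,\theta_d$, the primitive idempotent of $A$ associated with $\theta_i$ is $E_i=\prod_{j\ne i}(A-\theta_jI)/(\theta_i-\theta_j)$. A Leonard system in $\mathcal A$ is a sequence $\Phi=(A;A^*;\{E_i\}_{i=0}^d;\{E^*_i\}_{i=0}^d)$ such that (i) $A,A^*\in\mathcal A$ are multiplicity-free; (ii) $E_0,\dots,E_d$ is an ordering of the primitive idempotents of $A$; (iii) $E^*_0,\dots,E^*_d$ is an ordering of the primitive idempotents of $A^*$; (iv) $E_iA^*E_j=0$ if $|i-j|>1$ and $E_iA^*E_j\ne0$ if $|i-j|=1$ ($0\le i,j\le d$); (v) $E^*_iAE^*_j=0$ if $|i-j|>1$ and $E^*_iAE^*_j\ne0$ if $|i-j|=1$ ($0\le i,j\le d$). Here $A^*$ is merely notation (not an adjoint). Write $\theta_i$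 for the eigenvalue of $A$ associated with $E_i$. The scalar $\mathrm{tr}(E_0E^*_0)$ is nonzero; $\nu$ denotes its multiplicative inverse. Standard basis: for an irreducible (left) $\mathcal A$-module $V$ and a nonzero $u\in E_0V$, the vectors $E^*_0u,\dots,E^*_du$ form a basis of $V$; the matrix of $A$ in this basis is tridiagonal and independent of the choice of $u$; $c_i$ ($1\le i\le d$) is its $(i,i-1)$ entry. *)

From HB Require Import structures.
From mathcomp Require Import all_boot all_order all_algebra.
Set Implicit Arguments. Unset Strict Implicit. Unset Printing Implicit Defensive.
Import GRing.Theory.
Local Open Scope ring_scope.

(* The algebra 𝒜 ≅ Mat_{d+1}(K) is taken to be 'M[K]_(d.+1) itself; its
   irreducible left module is taken to be the column space 'cV[K]_(d.+1). *)

Definition is_eigenvalue (K : fieldType) (d : nat) (A : 'M[K]_d.+1) (a : K) :=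
  eigenvalue A a.

Definition mult_free (K : fieldType) (d : nat) (A : 'M[K]_d.+1) :=
  exists th : 'I_d.+1 -> K, injective th /\ forall i, is_eigenvalue A (th i).

Definition prim_idem (K : fieldType) (d : nat) (A : 'M[K]_d.+1)
  (th : 'I_d.+1 -> K) (i : 'I_d.+1) : 'M[K]_d.+1 :=
  \prod_(j < d.+1 | j != i) ((th i - th j)^-1 *: (A - (th j)%:M)).

Definition idem_ordering (K : fieldType) (d : nat) (A : 'M[K]_d.+1)
  (E : 'I_d.+1 -> 'M[K]_d.+1) :=
  exists th : 'I_d.+1 -> K, [/\ injective th, (forall i, is_eigenvalue A (th i))
    & forall i, E i = prim_idem A th i].

Definition Leonard_system (K : fieldType) (d : nat) (A As : 'M[K]_d.+1)
  (E Es : 'I_d.+1 -> 'M[K]_d.+1) :=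
  [/\ mult_free A /\ mult_free As, idem_ordering A E, idem_ordering As Es,
   (forall i j : 'I_d.+1,
      ((i.+1 < j)%N || (j.+1 < i)%N -> E i * As * E j = 0) /\
      ((i.+1 == j) || (j.+1 == i) -> E i * As * E j != 0)) &
   (forall i j : 'I_d.+1,
      ((i.+1 < j)%N || (j.+1 < i)%N -> Es i * A * Es j = 0) /\
      ((i.+1 == j) || (j.+1 == i) -> Es i * A * Es j != 0))].

Definition std_basis_mx (K : fieldType) (d : nat) (Es : 'I_d.+1 -> 'M[K]_d.+1)
  (u : 'cV[K]_d.+1) : 'M[K]_d.+1 :=
  \matrix_(r < d.+1, j < d.+1) (Es j *m u) r ord0.

Definition std_matrix (K : fieldType) (d : nat) (A : 'M[K]_d.+1)
  (Es : 'I_d.+1 -> 'M[K]_d.+1) (u : 'cV[K]_d.+1) : 'M[K]_d.+1 :=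
  invmx (std_basis_mx Es u) *m A *m std_basis_mx Es u.

(* c_i = (i, i-1) entry of that matrix, for 1 <= i <= d *)
Definition cseq (K : fieldType) (d : nat) (A : 'M[K]_d.+1)
  (Es : 'I_d.+1 -> 'M[K]_d.+1) (u : 'cV[K]_d.+1) (i : nat) : K :=
  std_matrix A Es u (inord i) (inord i.-1).

Definition nu (K : fieldType) (d : nat) (E Es : 'I_d.+1 -> 'M[K]_d.+1) : K :=
  (\tr (E ord0 * Es ord0))^-1.

(* Let P be the matrix of the standard basis E*_0 u, ..., E*_d u, so that
   T = P^-1 A P is lower Hessenberg with subdiagonal c_1, ..., c_d and u = P 1
   (as u = sum_i E*_i u).  Writing E_0 = prod_(i <> 0) (A - th_i) / (th_0 - th_i),
   the vector E_0 E*_0 u = E_0 (P e_0) has last P-coordinate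
   c_1 ... c_d / prod_(i <> 0) (th_0 - th_i).  But E_0 V is the line through u,
   so E_0 E*_0 u = lam u, and computing the trace in the basis P gives
   lam = tr (E_0 E*_0).  That the E*_i u form a basis comes from tridiagonality:
   the vectors A*^k u are triangular with respect to the E_j, hence span V, so
   no E*_i kills u. *)

From mathcomp Require Import all_boot all_order all_algebra.
From mathcomp Require Import zify.
Set Implicit Arguments. Unset Strict Implicit. Unset Printing Implicit Defensive.
Import GRing.Theory.
Local Open Scope ring_scope.

Section MatrixColumns.
Variable K : fieldType.

Lemma col_mulmx m n p (B : 'M[K]_(m, n)) (C : 'M[K]_(n, p)) j :
  col j (B *m C) = B *m col j C.
Proof. by rewrite !colE mulmxA. Qed.

Lemma mulmx_sum_col m n (B : 'M[K]_(m, n)) (c : 'cV[K]_n) :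
  B *m c = \sum_k c k 0 *: col k B.
Proof.
apply/matrixP=> i j; rewrite !mxE summxE; apply: eq_bigr => k _.
by rewrite !mxE (ord1 j) mulrC.
Qed.

Lemma col_inj_unitmx n (P : 'M[K]_n) :
  (forall c : 'cV[K]_n, P *m c = 0 -> c = 0) -> P \in unitmx.
Proof.
move=> P_inj; rewrite -unitmx_tr -row_free_unit; apply: inj_row_free => v Pv0.
have /P_inj/(congr1 trmx) : P *m v^T = 0 by rewrite -(trmxK P) -trmx_mul Pv0 trmx0.
by rewrite trmxK trmx0.
Qed.

Lemma mulmx_col_inj n (X F G : 'M[K]_n) : X \in unitmx ->
  (forall j, F *m col j X = G *m col j X) -> F = G.
Proof.
move=> Xu FG; have FXG : F *m X = G *m X.
  apply/matrixP => i j; move: (congr1 (fun v : 'cV[K]_n => v i 0) (FG j)).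
  by rewrite -!col_mulmx !mxE.
by rewrite -[F](mulmxK Xu) FXG mulmxK.
Qed.

Lemma exists_mulmx_neq0 n (M : 'M[K]_n) : M != 0 -> exists w : 'cV[K]_n, M *m w != 0.
Proof.
move=> M_neq0; have [/existsP [j Mj]|/existsPn M0] := boolP [exists j, M *m col j 1%:M != 0].
  by exists (col j 1%:M).
case/eqP: M_neq0; apply: (mulmx_col_inj (unitmx1 _ _)) => j.
by rewrite mul0mx; apply/eqP/negPn/M0.
Qed.

Lemma unitmx_triangular n (Y : 'M[K]_n) (F : 'I_n -> 'M[K]_n) :
  (forall j k : 'I_n, (k < j)%N -> F j *m col k Y = 0) ->
  (forall k, F k *m col k Y != 0) -> Y \in unitmx.
Proof.
move=> F_lower F_diag; apply: col_inj_unitmx => c Yc0.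
suff c0 t : forall k : 'I_n, (n - t <= k)%N -> c k 0 = 0.
  by apply/matrixP=> i j; rewrite (ord1 j) mxE (c0 n) // subnn.
elim: t => [|t IH] k le_k; first by move: (ltn_ord k) le_k; lia.
have [|lt_k] := leqP (n - t) k; first exact: IH.
have := congr1 (mulmx (F k)) Yc0; rewrite mulmx0 (mulmx_sum_col Y) mulmx_sumr.
rewrite (bigD1 k) //= big1 ?addr0 => [/eqP|l nlk].
  by rewrite -scalemxAr scaler_eq0 (negbTE (F_diag k)) orbF => /eqP.
rewrite -scalemxAr; have [lt_lk|le_kl] := ltnP l k; first by rewrite F_lower ?scaler0.
rewrite IH ?scale0r //; have : l != k :> nat by [].
by move: le_kl lt_k; lia.
Qed.

Lemma mulmx_biorthogonal n (P : 'M[K]_n) (F : 'I_n -> 'M[K]_n) j (c : 'cV[K]_n) :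
  (forall j k, F j *m col k P = (j == k)%:R *: col k P) ->
  F j *m (P *m c) = c j 0 *: col j P.
Proof.
move=> FP; rewrite (mulmx_sum_col P) mulmx_sumr (bigD1 j) //= big1 ?addr0.
  by rewrite -scalemxAr FP eqxx scale1r.
by move=> k /negbTE nkj; rewrite -scalemxAr FP eq_sym nkj scale0r scaler0.
Qed.

Lemma eigenvalue_col n (M : 'M[K]_n) a :
  eigenvalue M a -> exists2 x : 'cV[K]_n, M *m x = a *: x & x != 0.
Proof.
move=> Ma; have /eigenvalueP [v Mv v_neq0] : eigenvalue M^T a.
  move: Ma; rewrite /eigenvalue /eigenspace !kermx_eq0 !row_free_unit.
  by rewrite -unitmx_tr linearB /= tr_scalar_mx.
exists v^T; first by rewrite -(trmxK M) -trmx_mul Mv linearZ.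
by rewrite -trmx0 (inj_eq trmx_inj).
Qed.

Lemma mulmx_prod_eigvec n (I : Type) (r : seq I) (P : pred I)
    (F : I -> 'M[K]_n.+1) (f : I -> K) (y : 'cV[K]_n.+1) :
  (forall k, P k -> F k *m y = f k *: y) ->
  (\prod_(k <- r | P k) F k) *m y = (\prod_(k <- r | P k) f k) *: y.
Proof.
move=> Fy; elim: r => [|x r IH]; first by rewrite !big_nil mul1mx scale1r.
rewrite !big_cons; case: (boolP (P x)) => Px //.
by rewrite -mulmxE -mulmxA IH -scalemxAr Fy // scalerA mulrC.
Qed.

End MatrixColumns.

Section PrimitiveIdempotents.
Variables (K : fieldType) (d : nat) (M : 'M[K]_d.+1) (th : 'I_d.+1 -> K).
Hypothesis th_inj : injective th.
Local Notation E := (prim_idem M th).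

Lemma prim_idem_eigvec i j (y : 'cV[K]_d.+1) : M *m y = th j *: y -> E i *m y = (i == j)%:R *: y.
Proof.
move=> My; rewrite (@mulmx_prod_eigvec _ _ _ _ _ _ (fun k => (th i - th k)^-1 * (th j - th k))).
  have [<-|nij] := eqVneq i j; last by rewrite (bigD1 j) 1?eq_sym //= subrr mulr0 mul0r.
  rewrite big1 // => k nki; rewrite mulVf // subr_eq0.
  by apply: contra nki => /eqP/th_inj ->.
by move=> k _; rewrite -scalemxAl mulmxBl My mul_scalar_mx -scalerBl scalerA.
Qed.

Hypothesis th_eig : forall i, is_eigenvalue M (th i).

Lemma eigenbasis : exists2 X : 'M[K]_d.+1, X \in unitmx &
  forall j, M *m col j X = th j *: col j X.
Proof.
have [f Mf f_neq0] := fin_all_exists2 (fun i => eigenvalue_col (th_eig i)).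
have colX j : col j (\matrix_(r, k) f k r 0) = f j by apply/matrixP=> r c; rewrite !mxE (ord1 c).
exists (\matrix_(r, k) f k r 0) => [|j]; last by rewrite colX.
apply: (@unitmx_triangular _ _ _ E) => [j k lt_kj|k]; rewrite colX (prim_idem_eigvec _ (Mf k)).
  by rewrite -val_eqE /= (gtn_eqF lt_kj) scale0r.
by rewrite eqxx scale1r f_neq0.
Qed.

Lemma mulmx_prim_idem i : M *m E i = th i *: E i.
Proof.
have [X Xu MX] := eigenbasis; apply: (mulmx_col_inj Xu) => j.
rewrite -mulmxA -scalemxAl (prim_idem_eigvec _ (MX j)) -scalemxAr MX !scalerA.
by have [->|_] := eqVneq i j; rewrite mulrC // !mulr0.
Qed.

Lemma mulmx_prim_idemv i (v : 'cV[K]_d.+1) : M *m (E i *m v) = th i *: (E i *m v).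
Proof. by rewrite mulmxA mulmx_prim_idem -scalemxAl. Qed.

Lemma sum_prim_idem : \sum_i E i = 1%:M.
Proof.
have [X Xu MX] := eigenbasis; apply: (mulmx_col_inj Xu) => j.
rewrite mulmx_suml mul1mx (bigD1 j) //= big1 ?addr0.
  by rewrite (prim_idem_eigvec _ (MX j)) eqxx scale1r.
by move=> k /negbTE nkj; rewrite (prim_idem_eigvec _ (MX j)) nkj scale0r.
Qed.

Lemma eigvec_collinear i (y z : 'cV[K]_d.+1) :
  M *m y = th i *: y -> M *m z = th i *: z -> z != 0 -> exists c, y = c *: z.
Proof.
have [X Xu MX] := eigenbasis.
have coord (w : 'cV_d.+1) : M *m w = th i *: w -> w = (invmx X *m w) i 0 *: col i X.
  move=> /(prim_idem_eigvec i); rewrite eqxx scale1r => Ew.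
  rewrite -[LHS]Ew -[in LHS](mulKVmx Xu w).
  exact: mulmx_biorthogonal (fun j k => prim_idem_eigvec j (MX k)).
move=> /coord -> /coord z_def z_neq0; set b := (invmx X *m z) i 0 in z_def.
have b_neq0 : b != 0 by apply: contra z_neq0 => /eqP b0; rewrite z_def b0 scale0r.
by exists ((invmx X *m y) i 0 / b); rewrite z_def scalerA divfK.
Qed.

(* Holds because E_j V is a line. *)
Lemma prim_idem_sandwich_neq0 (N : 'M[K]_d.+1) i j (y : 'cV[K]_d.+1) :
  E i *m N *m E j != 0 -> E j *m y != 0 -> E i *m N *m (E j *m y) != 0.
Proof.
move=> /exists_mulmx_neq0 [w ENEw] Ey_neq0; apply: contra ENEw => /eqP ENEy0; rewrite -mulmxA.
have [c ->] := eigvec_collinear (mulmx_prim_idemv j w) (mulmx_prim_idemv j y) Ey_neq0.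
by rewrite -scalemxAr ENEy0 scaler0.
Qed.

Lemma prim_idem_comm i : E i *m M = M *m E i.
Proof.
have commM : GRing.comm M (E i).
  apply: commr_prod => j _; rewrite /GRing.comm -scalerAl -scalerAr; congr (_ *: _).
  apply: commrB; first exact: commr_refl.
  by rewrite /GRing.comm -!mulmxE scalar_mxC.
by rewrite !mulmxE commM.
Qed.

End PrimitiveIdempotents.

Section LowerHessenberg.
Variables (K : fieldType) (d : nat) (T : 'M[K]_d.+1).
Hypothesis T_hess : forall i k : 'I_d.+1, (k.+1 < i)%N -> T i k = 0.

Lemma prod_hessenberg_col0 (a : nat -> K) m (i : 'I_d.+1) :
  (m < i)%N -> (\prod_(k < m) (T - (a k)%:M)) i 0 = 0.
Proof.
elim: m a i => [|m IH] a i lt_mi; first by rewrite big_ord0 mxE; case: eqP lt_mi => [->|].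
rewrite big_ord_recl -mulmxE mulmxBl mul_scalar_mx !mxE.
rewrite (IH (fun k => a k.+1)) 1?ltnW // mulr0 subr0 big1 // => j _.
have [le_jm|lt_mj] := leqP j m; first by rewrite T_hess ?mul0r //; lia.
by rewrite (IH (fun k => a k.+1)) ?mulr0.
Qed.

Lemma prod_hessenberg_col0_last (a : nat -> K) m : (m <= d)%N ->
  (\prod_(k < m) (T - (a k)%:M)) (inord m) 0 = \prod_(1 <= k < m.+1) T (inord k) (inord k.-1).
Proof.
elim: m a => [|m IH] a le_md.
  by rewrite big_ord0 big_geq // mxE (_ : inord 0 = 0) ?eqxx //; apply/val_inj; rewrite /= inordK.
have im : (inord m : 'I_d.+1) = m :> nat by rewrite inordK //; lia.
have im1 : (inord m.+1 : 'I_d.+1) = m.+1 :> nat by rewrite inordK.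
rewrite big_ord_recl -mulmxE mulmxBl mul_scalar_mx !mxE.
rewrite (prod_hessenberg_col0 (fun k => a k.+1)) ?im1 // mulr0 subr0 (bigD1 (inord m)) //= big1 ?addr0.
  by rewrite (IH (fun k => a k.+1)) 1?ltnW // [in RHS]big_nat_recr //= mulrC.
move=> j nj; have [le_jm|lt_mj] := ltnP j m.
  by rewrite T_hess ?mul0r // im1; lia.
rewrite (prod_hessenberg_col0 (fun k => a k.+1)) ?mulr0 // ltn_neqAle lt_mj andbT.
by apply: contra nj => /eqP mj; apply/eqP/val_inj; rewrite /= im.
Qed.

End LowerHessenberg.

Lemma prod_sub_scalar_intertwine (K : fieldType) n (A P T : 'M[K]_n.+1) (I : Type)
    (r : seq I) (Pr : pred I) (a : I -> K) :
  A *m P = P *m T ->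
  (\prod_(k <- r | Pr k) (A - (a k)%:M)) *m P = P *m \prod_(k <- r | Pr k) (T - (a k)%:M).
Proof.
move=> APT; apply: (big_ind2 (fun X Y => X *m P = P *m Y)).
- by rewrite mul1mx mulmx1.
- by move=> X1 Y1 X2 Y2 XY1 XY2; rewrite -!mulmxE -mulmxA XY2 !mulmxA XY1.
- by move=> k _; rewrite mulmxBl mulmxBr APT mul_scalar_mx mul_mx_scalar.
Qed.

Lemma prod_ord_neq0 (R : pzSemiRingType) d (F : 'I_d.+1 -> R) :
  \prod_(j < d.+1 | j != ord0) F j = \prod_(k < d) F (inord k.+1).
Proof.
rewrite big_mkcond big_ord_recl eqxx /= mul1r; apply: eq_bigr => k _.
by rewrite (_ : lift ord0 k = inord k.+1) //; apply/val_inj; rewrite /= inordK // ltnS.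
Qed.

Section LeonardSystem.
Variables (K : fieldType) (d : nat) (A As : 'M[K]_d.+1).
Variables (E Es : 'I_d.+1 -> 'M[K]_d.+1) (th ths : 'I_d.+1 -> K) (u : 'cV[K]_d.+1).
Hypotheses (th_inj : injective th) (th_eig : forall i, is_eigenvalue A (th i)).
Hypothesis E_def : forall i, E i = prim_idem A th i.
Hypotheses (ths_inj : injective ths) (ths_eig : forall i, is_eigenvalue As (ths i)).
Hypothesis Es_def : forall i, Es i = prim_idem As ths i.
Hypothesis E_As_E_lower : forall i j : 'I_d.+1, (j.+1 < i)%N -> E i *m As *m E j = 0.
Hypothesis E_As_E_sub : forall i j : 'I_d.+1, j.+1 == i -> E i *m As *m E j != 0.
Hypothesis Es_A_Es_lower : forall i j : 'I_d.+1, (j.+1 < i)%N -> Es i *m A *m Es j = 0.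
Hypothesis Es_A_Es_sub : forall i j : 'I_d.+1, j.+1 == i -> Es i *m A *m Es j != 0.
Hypotheses (u_neq0 : u != 0) (E0u : E 0 *m u = u).

Lemma E_eigvec i (w : 'cV[K]_d.+1) : A *m (E i *m w) = th i *: (E i *m w).
Proof. by rewrite E_def mulmx_prim_idemv. Qed.

Lemma Es_eigvec i (w : 'cV[K]_d.+1) : As *m (Es i *m w) = ths i *: (Es i *m w).
Proof. by rewrite Es_def mulmx_prim_idemv. Qed.

Lemma A_u : A *m u = th 0 *: u.
Proof. by rewrite -E0u E_eigvec. Qed.

Lemma E_u j : E j *m u = (j == 0)%:R *: u.
Proof. by rewrite E_def (prim_idem_eigvec _ _ A_u). Qed.

Lemma E_mulmx_sum (N : 'M[K]_d.+1) j (y : 'cV[K]_d.+1) :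
  E j *m (N *m y) = \sum_l E j *m N *m (E l *m y).
Proof.
rewrite -mulmx_sumr -mulmx_suml -mulmxA.
by rewrite (eq_bigr _ (fun l _ => E_def l)) sum_prim_idem // mul1mx.
Qed.

Lemma E_powers_lower k (j : 'I_d.+1) : (k < j)%N -> E j *m (As ^+ k *m u) = 0.
Proof.
elim: k j => [|k IH] j lt_kj.
  by rewrite expr0 mul1mx E_u; case: eqP lt_kj => [->|_]; rewrite ?scale0r.
rewrite exprS -mulmxE -mulmxA E_mulmx_sum big1 // => l _.
have [le_lk|lt_kl] := leqP l k; last by rewrite IH ?mulmx0.
by rewrite mulmxA E_As_E_lower ?mul0mx //; lia.
Qed.

Lemma E_powers_diag_neq0 k : (k <= d)%N -> E (inord k) *m (As ^+ k *m u) != 0.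
Proof.
elim: k => [|k IH] le_kd.
  by rewrite expr0 mul1mx E_u (_ : inord 0 = 0) ?eqxx ?scale1r //; apply/val_inj; rewrite /= inordK.
have ik : (inord k : 'I_d.+1) = k :> nat by rewrite inordK //; lia.
rewrite exprS -mulmxE -mulmxA E_mulmx_sum (bigD1 (inord k)) //= big1 ?addr0.
  have sub_k : (inord k : 'I_d.+1).+1 == (inord k.+1 : 'I_d.+1) by rewrite ik inordK.
  have := E_As_E_sub sub_k; rewrite !E_def => /prim_idem_sandwich_neq0; apply=> //.
  by rewrite -E_def IH // ltnW.
move=> l nlk; have [lt_lk|le_kl] := ltnP l k.
  by rewrite mulmxA E_As_E_lower ?mul0mx // inordK //; lia.
rewrite E_powers_lower ?mulmx0 // ltn_neqAle le_kl andbT.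
by apply: contra nlk => /eqP kl; apply/eqP/val_inj; rewrite /= ik.
Qed.

Lemma Es_u_neq0 i : Es i *m u != 0.
Proof.
set Y := \matrix_(r, k < d.+1) (As ^+ k *m u) r 0.
have colY k : col k Y = As ^+ k *m u by apply/matrixP=> r c; rewrite !mxE (ord1 c).
have Yu : Y \in unitmx.
  apply: (@unitmx_triangular _ _ _ E) => [j k lt_kj|k]; rewrite colY.
    exact: E_powers_lower.
  by have := E_powers_diag_neq0 (ltn_ord k); rewrite inord_val.
apply/negP => /eqP Esu0; have [x Asx x_neq0] := eigenvalue_col (ths_eig i).
have Es0 : Es i = 0.
  have commEs : GRing.comm (Es i) As by rewrite /GRing.comm -!mulmxE Es_def prim_idem_comm.
  apply: (mulmx_col_inj Yu) => k; rewrite mul0mx colY mulmxA.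
  by have := commrX k commEs; rewrite /GRing.comm -!mulmxE => ->; rewrite -mulmxA Esu0 mulmx0.
have := prim_idem_eigvec ths_inj i Asx; rewrite -Es_def Es0 mul0mx eqxx scale1r => x0.
by rewrite -x0 eqxx in x_neq0.
Qed.

Local Notation P := (std_basis_mx Es u).
Local Notation T := (std_matrix A Es u).

Lemma col_std_basis j : col j P = Es j *m u.
Proof. by apply/matrixP=> r c; rewrite !mxE (ord1 c). Qed.

Lemma Es_std_basis j k : Es j *m col k P = (j == k)%:R *: col k P.
Proof. by rewrite !col_std_basis Es_def (prim_idem_eigvec _ _ (Es_eigvec k u)). Qed.

Lemma std_basis_unitmx : P \in unitmx.
Proof.
apply: (@unitmx_triangular _ _ _ Es) => [j k lt_kj|k]; rewrite Es_std_basis.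
  by rewrite -val_eqE /= (gtn_eqF lt_kj) scale0r.
by rewrite eqxx scale1r col_std_basis Es_u_neq0.
Qed.

Lemma std_basis_ones : P *m const_mx 1 = u.
Proof.
rewrite (mulmx_sum_col P); under eq_bigr do rewrite mxE scale1r col_std_basis Es_def.
by rewrite -mulmx_suml sum_prim_idem // mul1mx.
Qed.

Lemma mulmx_std_basis : A *m P = P *m T.
Proof. by rewrite !mulmxA mulmxV ?mul1mx // std_basis_unitmx. Qed.

Lemma Es_A_std_basis (i m : 'I_d.+1) : Es i *m (A *m col m P) = T i m *: col i P.
Proof.
rewrite -col_mulmx mulmx_std_basis col_mulmx.
by rewrite (mulmx_biorthogonal _ _ Es_std_basis) mxE.
Qed.

Lemma std_matrix_hessenberg (i m : 'I_d.+1) : (m.+1 < i)%N -> T i m = 0.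
Proof.
move=> lt_mi; have := Es_A_std_basis i m; rewrite !col_std_basis !mulmxA.
rewrite Es_A_Es_lower // mul0mx => /esym/eqP; rewrite scaler_eq0 (negbTE (Es_u_neq0 i)) orbF.
by move/eqP.
Qed.

Lemma cseq_neq0 k : (0 < k <= d)%N -> cseq A Es u k != 0.
Proof.
move=> /andP [k_gt0 le_kd].
have sub_k : (inord k.-1 : 'I_d.+1).+1 == (inord k : 'I_d.+1) by rewrite !inordK //; lia.
have := Es_A_Es_sub sub_k; have := Es_u_neq0 (inord k.-1); rewrite !Es_def.
move=> Esu /(prim_idem_sandwich_neq0 ths_inj ths_eig)/(_ Esu).
rewrite -!Es_def -mulmxA -col_std_basis Es_A_std_basis.
by apply: contra => /eqP T0; rewrite /cseq in T0; rewrite T0 scale0r.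
Qed.

Lemma std_coords_u : invmx P *m u = const_mx 1.
Proof. by rewrite -(congr1 (mulmx (invmx P)) std_basis_ones) mulKmx // std_basis_unitmx. Qed.

Lemma mxtrace_E0_Es0 lam : E 0 *m (Es 0 *m u) = lam *: u -> \tr (E 0 * Es 0) = lam.
Proof.
move=> E0Es0u; set X := invmx P *m (E 0 *m Es 0 *m P).
have trX : \tr (E 0 * Es 0) = \tr X.
  by rewrite /X [RHS]mxtrace_mulC mulmxK ?std_basis_unitmx // mulmxE.
have colX i : col i X = ((i == 0)%:R * lam) *: const_mx 1.
  rewrite /X !col_mulmx -mulmxA Es_std_basis eq_sym.
  have [->|_] := eqVneq i 0; last by rewrite !scale0r !mulmx0 mul0r scale0r.
  by rewrite scale1r col_std_basis E0Es0u -scalemxAr std_coords_u mul1r.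
have Xii i : X i i = (i == 0)%:R * lam.
  by have := congr1 (fun v : 'cV_d.+1 => v i 0) (colX i); rewrite !mxE mulr1.
rewrite trX /mxtrace (bigD1 0) //= Xii eqxx mul1r big1 ?addr0 // => i /negbTE ni0.
by rewrite Xii ni0 mul0r.
Qed.

Lemma E0_factor : E 0 = (\prod_(i < d.+1 | i != 0) (th 0 - th i))^-1 *:
  \prod_(k < d) (A - (th (inord k.+1))%:M).
Proof.
rewrite E_def /prim_idem scaler_prod prodfV; congr (_ *: _).
exact: prod_ord_neq0.
Qed.

Lemma E0_Es0_u : E 0 *m (Es 0 *m u) =
  ((\prod_(i < d.+1 | i != 0) (th 0 - th i))^-1 * \prod_(1 <= i < d.+1) cseq A Es u i) *: u.
Proof.
have [lam E0Es0u] := eigvec_collinear th_inj th_eig (E_eigvec 0 (Es 0 *m u)) A_u u_neq0.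
rewrite E0Es0u; congr (_ *: _).
set kap := _^-1; set QT := \prod_(k < d) (T - (th (inord k.+1))%:M).
have coords : invmx P *m (E 0 *m col 0 P) = kap *: col 0 QT.
  rewrite -!col_mulmx E0_factor -scalemxAl (prod_sub_scalar_intertwine _ _ _ mulmx_std_basis).
  by rewrite -scalemxAr mulKmx ?std_basis_unitmx // linearZ.
have := congr1 (fun v : 'cV_d.+1 => v (inord d) 0) coords.
rewrite /= col_std_basis E0Es0u -scalemxAr std_coords_u !mxE mulr1 => ->.
by rewrite /QT (prod_hessenberg_col0_last std_matrix_hessenberg (fun k => th (inord k.+1))).
Qed.

Lemma prod_cseq_neq0 : \prod_(1 <= i < d.+1) cseq A Es u i != 0.
Proof.
rewrite prodf_seq_neq0; apply/allP => k; rewrite mem_index_iota => k_range.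
by apply/implyP => _; apply: cseq_neq0.
Qed.

Lemma prod_eigenvalue_gaps :
  \prod_(i < d.+1 | i != 0) (th 0 - th i) = nu E Es * \prod_(1 <= i < d.+1) cseq A Es u i.
Proof.
by rewrite /nu (mxtrace_E0_Es0 E0_Es0_u) invfM invrK divfK // prod_cseq_neq0.
Qed.

End LeonardSystem.

Lemma tridiagonal_lower (K : fieldType) d (F : 'I_d.+1 -> 'M[K]_d.+1) (N : 'M[K]_d.+1) :
  (forall i j : 'I_d.+1,
     ((i.+1 < j)%N || (j.+1 < i)%N -> F i * N * F j = 0) /\
     ((i.+1 == j) || (j.+1 == i) -> F i * N * F j != 0)) ->
  (forall i j : 'I_d.+1, (j.+1 < i)%N -> F i *m N *m F j = 0) /\
  (forall i j : 'I_d.+1, j.+1 == i -> F i *m N *m F j != 0).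
Proof.
move=> tri; split=> i j ji; have [F0 F_neq0] := tri i j; rewrite !mulmxE.
  by apply: F0; rewrite ji orbT.
by apply: F_neq0; rewrite ji orbT.
Qed.

Theorem theorem11p5 (K : fieldType) (d : nat) (A As : 'M[K]_d.+1)
  (E Es : 'I_d.+1 -> 'M[K]_d.+1) (th : 'I_d.+1 -> K) (u : 'cV[K]_d.+1) :
  Leonard_system A As E Es ->
  injective th -> (forall i, is_eigenvalue A (th i)) ->
  (forall i, E i = prim_idem A th i) ->
  u != 0 -> E ord0 *m u = u ->
  \prod_(i < d.+1 | i != ord0) (th ord0 - th i)
    = nu E Es * \prod_(1 <= i < d.+1) cseq A Es u i.
Proof.
case=> _ _ [ths [ths_inj ths_eig Es_def]] /tridiagonal_lower [E_lower E_sub].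
move=> /tridiagonal_lower [Es_lower Es_sub] th_inj th_eig E_def u_neq0 E0u.
exact: (prod_eigenvalue_gaps th_inj th_eig E_def ths_inj ths_eig Es_def
  E_lower E_sub Es_lower Es_sub u_neq0 E0u).
Qed.
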